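(* Let $p$ be a design (probability distribution of a random treatment vector $\mathbf Z\in\{0,1\}^n$) such that with probability one at least one unit is treated and at least one unit is in control. Suppose each unit $i$ has potential outcomes $Y_i(z,e)$, $z\in\{0,1\}$, $e\in\{0,1,\dots,K_i-1\}$, of the form $Y_i(z,e)=A_i(z)+B_i(e)+zC_i(e)$ with $B_i(0)=C_i(0)=0$. Let $\mathrm{DTE}=\frac1n\sum_{i=1}^n\big(Y_i(1,0)-Y_i(0,0)\big)$ and let $$\hat\beta_{naive}=\frac{\sum_i Y_i^{obs}Z_i}{\sum_i Z_i}-\frac{\sum_i Y_i^{obs}(1-Z_i)}{\sum_i(1-Z_i)}.$$ Then $\mathrm{DTE}=\frac1n\sum_{i=1}^n(A_i(1)-A_i(0))$ and $$\mathbb E[\hat\beta_{naive}]-\mathrm{DTE}=\sum_i\Big(A_i(1)\big(\alpha_i(1)-\tfrac1n\big)-A_i(0)\big(\alpha_i(0)-\tfrac1n\big)\Big)+\sum_i\sum_{e\neq0}B_i(e)\big(\alpha_i(1,e)-\alpha_i(0,e)\big)+\sum_i\sum_{e\ne0}C_i(e)\,\alpha_i(1,e),$$ where $\alpha_i(z,e)=\mathbb E\!\left[\frac{I(Z_i=z,E_i=e)}{\sum_{j}I(Z_j=z)}\right]$ and $\alpha_i(z)=\sum_e\alpha_i(z,e)=\mathbb E\!\left[\frac{I(Z_i=z)}{\sum_j I(Z_j=z)}\right]$.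
   Context: Each unit $i$ has an interference neighborhood $N_i$ and an exposure function $f$ mapping $\{0,1\}^{N_i}$ onto $\{0,\dots,K_i-1\}$; the random exposure is $E_i=f(\mathbf Z_{N_i})$. Exposure level $0$ means ''not exposed''. The potential outcomes $Y_i(z,e)$ are fixed numbers; the observed outcome is $Y_i^{obs}=Y_i(Z_i,E_i)$ and all expectations are over the design. *)

From HB Require Import structures.
From mathcomp Require Import all_boot all_order all_algebra.
Set Implicit Arguments. Unset Strict Implicit. Unset Printing Implicit Defensive.
Import Order.TTheory GRing.Theory Num.Theory.
Local Open Scope ring_scope.

Notation assign n := {ffun 'I_n -> bool}.

Definition is_design (R : numFieldType) (n : nat) (p : assign n -> R) : Prop :=
  (forall z, 0 <= p z) /\ \sum_(z : assign n) p z = 1.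

Definition Expect (R : numFieldType) (n : nat) (p : assign n -> R)
  (X : assign n -> R) : R := \sum_(z : assign n) p z * X z.

Definition ind (R : numFieldType) (b : bool) : R := (b : nat)%:R.

Definition nwith (R : numFieldType) (n : nat) (z : assign n) (b : bool) : R :=
  \sum_(j < n) ind R (z j == b).

Definition alpha (R : numFieldType) (n : nat) (K : 'I_n -> nat)
  (p : assign n -> R) (E : forall i : 'I_n, assign n -> 'I_(K i).+1)
  (i : 'I_n) (b : bool) (e : 'I_(K i).+1) : R :=
  Expect p (fun z => ind R ((z i == b) && (E i z == e)) / nwith R z b).

Definition alpha1 (R : numFieldType) (n : nat) (p : assign n -> R)
  (i : 'I_n) (b : bool) : R :=
  Expect p (fun z => ind R (z i == b) / nwith R z b).

Definition Yobs (R : numFieldType) (n : nat) (K : 'I_n -> nat)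
  (Y : forall i : 'I_n, bool -> 'I_(K i).+1 -> R)
  (E : forall i : 'I_n, assign n -> 'I_(K i).+1) (i : 'I_n) (z : assign n) : R :=
  Y i (z i) (E i z).

Definition beta_naive (R : numFieldType) (n : nat) (K : 'I_n -> nat)
  (Y : forall i : 'I_n, bool -> 'I_(K i).+1 -> R)
  (E : forall i : 'I_n, assign n -> 'I_(K i).+1) (z : assign n) : R :=
  (\sum_(i < n) Yobs Y E i z * ind R (z i)) / (\sum_(i < n) ind R (z i))
  - (\sum_(i < n) Yobs Y E i z * ind R (~~ z i)) / (\sum_(i < n) ind R (~~ z i)).

Definition DTE (R : numFieldType) (n : nat) (K : 'I_n -> nat)
  (Y : forall i : 'I_n, bool -> 'I_(K i).+1 -> R) : R :=
  n%:R^-1 * \sum_(i < n) (Y i true ord0 - Y i false ord0).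

(* The estimator is linear in the observed outcomes, so its expectation is
   computed unit by unit.  Within arm b the observed outcome of unit i is
   Y_i(b,0) + sum_{e<>0} (Y_i(b,e) - Y_i(b,0)) I(E_i = e); taking expectations
   of the arm means gives the weights alpha_i(b) and alpha_i(b,e).  For outcomes
   of the form A_i(z) + B_i(e) + z C_i(e) with B_i(0) = C_i(0) = 0 these
   increments are B_i(e) + b C_i(e), and subtracting the DTE, which only sees
   the A_i, leaves the stated bias.  The identity holds pointwise before
   averaging, for every weighting p and even when an arm is empty (both sides
   then divide by 0, which is 0). *)
From HB Require Import structures.
From mathcomp Require Import all_boot all_order all_algebra.
From mathcomp Require Import ring.
Import Order.TTheory GRing.Theory Num.Theory.
Local Open Scope ring_scope.

Lemma indT (R : numFieldType) : ind R true = 1. Proof. by []. Qed.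
Lemma indF (R : numFieldType) : ind R false = 0. Proof. by []. Qed.

Lemma sumD1_mul_ind_eq (R : numFieldType) (T : finType) (e0 x : T) (F : T -> R) :
  F e0 = 0 -> \sum_(e | e != e0) F e * ind R (x == e) = F x.
Proof.
move=> F0; have -> : \sum_(e | e != e0) F e * ind R (x == e)
                    = \sum_e F e * ind R (x == e).
  by rewrite [RHS](bigD1 e0) //= F0 mul0r add0r.
rewrite (bigD1 x) //= eqxx indT mulr1 big1 ?addr0 // => e /negbTE.
by rewrite eq_sym => ->; rewrite indF mulr0.
Qed.

Section Expectation.
Context {R : numFieldType} {n : nat} (p : assign n -> R).

Lemma eq_Expect {X Y : assign n -> R} :
  (forall z, X z = Y z) -> Expect p X = Expect p Y.
Proof. by move=> eqXY; apply: eq_bigr => z _; rewrite eqXY. Qed.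

Lemma ExpectD (X Y : assign n -> R) :
  Expect p (fun z => X z + Y z) = Expect p X + Expect p Y.
Proof. by rewrite /Expect -big_split; apply: eq_bigr => z _; rewrite mulrDr. Qed.

Lemma ExpectB (X Y : assign n -> R) :
  Expect p (fun z => X z - Y z) = Expect p X - Expect p Y.
Proof. by rewrite /Expect -sumrB; apply: eq_bigr => z _; rewrite mulrBr. Qed.

Lemma ExpectMl (c : R) (X : assign n -> R) :
  Expect p (fun z => c * X z) = c * Expect p X.
Proof. by rewrite /Expect mulr_sumr; apply: eq_bigr => z _; rewrite mulrCA. Qed.

Lemma Expect_sum (I : Type) (r : seq I) (P : pred I) (F : I -> assign n -> R) :
  Expect p (fun z => \sum_(i <- r | P i) F i z) = \sum_(i <- r | P i) Expect p (F i).
Proof. by rewrite /Expect; under eq_bigr do rewrite mulr_sumr; exact: exchange_big. Qed.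

End Expectation.

Section ArmMeans.
Context {R : numFieldType} {n : nat} (p : assign n -> R) {K : 'I_n -> nat}.
Context (E : forall i : 'I_n, assign n -> 'I_(K i).+1).
Context (Y : forall i : 'I_n, bool -> 'I_(K i).+1 -> R).

Definition arm_mean (b : bool) (z : assign n) : R :=
  \sum_(i < n) Yobs Y E i z * (ind R (z i == b) / nwith R z b).

Lemma beta_naiveE z : beta_naive Y E z = arm_mean true z - arm_mean false z.
Proof.
have nwithE b : \sum_(i < n) ind R (if b then z i else ~~ z i) = nwith R z b.
  by apply: eq_bigr => i _; case: b; case: (z i).
rewrite /beta_naive (nwithE true) (nwithE false) !mulr_suml.
by congr (_ - _); apply: eq_bigr => i _; rewrite mulrA; case: (z i).
Qed.

Lemma Yobs_arm_weightE i b z :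
  Yobs Y E i z * (ind R (z i == b) / nwith R z b) =
  Y i b ord0 * (ind R (z i == b) / nwith R z b)
  + \sum_(e < (K i).+1 | e != ord0) (Y i b e - Y i b ord0)
      * (ind R ((z i == b) && (E i z == e)) / nwith R z b).
Proof.
have [<-|_] := eqVneq (z i) b; last first.
  by rewrite indF !mul0r !mulr0 add0r big1 // => e _; rewrite mulr0.
under eq_bigr do rewrite /= mulrA.
rewrite -mulr_suml sumD1_mul_ind_eq ?subrr // indT mul1r /Yobs -mulrDl.
by rewrite addrC subrK.
Qed.

Lemma Expect_arm_mean b :
  Expect p (arm_mean b) =
  \sum_(i < n) (Y i b ord0 * alpha1 p i b
    + \sum_(e < (K i).+1 | e != ord0) (Y i b e - Y i b ord0) * alpha p E b e).
Proof.
under eq_Expect => z do rewrite /arm_mean (eq_bigr _ (fun i _ => Yobs_arm_weightE i b z)).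
rewrite Expect_sum; apply: eq_bigr => i _.
by rewrite ExpectD ExpectMl Expect_sum; under eq_bigr do rewrite ExpectMl.
Qed.

End ArmMeans.

Theorem proposition10 (R : realFieldType) (n : nat) (p : assign n -> R)
  (N : 'I_n -> {set 'I_n}) (K : 'I_n -> nat)
  (E : forall i : 'I_n, assign n -> 'I_(K i).+1)
  (Y : forall i : 'I_n, bool -> 'I_(K i).+1 -> R)
  (A : 'I_n -> bool -> R)
  (B C : forall i : 'I_n, 'I_(K i).+1 -> R) :
  is_design p ->
  (forall z, 0 < p z -> [exists j, z j] && [exists j, ~~ z j]) ->
  (* exposure E_i = f(Z_{N_i}) depends only on the neighborhood N_i *)
  (forall i (z z' : assign n), (forall j, j \in N i -> z j = z' j) -> E i z = E i z') ->
  (* the exposure mapping is onto {0, ..., K_i - 1} (here K_i = (K i).+1) *)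
  (forall i (e : 'I_(K i).+1), exists z, E i z = e) ->
  (forall i (z : bool) e, Y i z e = A i z + B i e + ind R z * C i e) ->
  (forall i, B i ord0 = 0) ->
  (forall i, C i ord0 = 0) ->
  DTE Y = n%:R^-1 * \sum_(i < n) (A i true - A i false)
  /\
  Expect p (beta_naive Y E) - DTE Y =
    \sum_(i < n) (A i true * (alpha1 p i true - n%:R^-1)
                  - A i false * (alpha1 p i false - n%:R^-1))
    + \sum_(i < n) \sum_(e < (K i).+1 | e != ord0)
         B i e * (alpha p E true e - alpha p E false e)
    + \sum_(i < n) \sum_(e < (K i).+1 | e != ord0) C i e * alpha p E true e.
Proof.
move=> _ _ _ _ YE B0 C0.
have Y0 i b : Y i b ord0 = A i b by rewrite YE B0 C0 mulr0 !addr0.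
have Yinc i b e : Y i b e - Y i b ord0 = B i e + ind R b * C i e.
  by rewrite Y0 YE; ring.
have DTE_A : DTE Y = n%:R^-1 * \sum_(i < n) (A i true - A i false).
  by congr (_ * _); apply: eq_bigr => i _; rewrite !Y0.
split=> //.
rewrite DTE_A (eq_Expect p (beta_naiveE E Y)) ExpectB !Expect_arm_mean.
rewrite mulr_sumr -!sumrB -!big_split; apply: eq_bigr => i _ /=.
have arm b : \sum_(e < (K i).+1 | e != ord0) (Y i b e - Y i b ord0) * alpha p E b e
    = \sum_(e < (K i).+1 | e != ord0) B i e * alpha p E b e
      + ind R b * \sum_(e < (K i).+1 | e != ord0) C i e * alpha p E b e.
  by rewrite mulr_sumr -big_split; apply: eq_bigr => e _; rewrite Yinc mulrDl mulrA.
rewrite !arm !Y0 indT indF mul1r mul0r addr0.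
under [in RHS]eq_bigr do rewrite mulrBr.
rewrite sumrB; ring.
Qed.
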